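(* Let $\tau\subset\overline{\mathrm{K\ddot ah}(X)}$ be a cone and $\beta=(0,\dots,0,-1/2,\dots,-1/2)$. Then the zero locus of $\mathrm{Ind}(\tau,\beta)$ in $\mathbb{C}^J$ consists of at most one point, namely $\alpha^0=(\alpha^0_{i,j})$ with $\alpha^0_{i,0}=-1/2$ for $1\le i\le r$ and $\alpha^0_{i,j}=0$ for $j\ge1$.
   Context: $N\cong\mathbb{Z}^n$, $M$ dual. $X$ smooth projective toric with fan $\Sigma$ and nef-partition $\Sigma(1)=I_1\sqcup\cdots\sqcup I_r$ (each $E_i=\sum_{\rho\in I_i}D_\rho$ nef), $I_i=\{\rho_{i,1},\dots,\rho_{i,n_i}\}$, $J=\{(i,j):1\le i\le r,0\le j\le n_i\}$, $\nu_{i,j}=(\rho_{i,j},e_i)$ ($j\ge1$), $\nu_{i,0}=(0,e_i)$ in $N\times\mathbb{Z}^r$. $L_{\mathrm{ext}}=\ker(\mathbb{Z}^J\to N\times\mathbb{Z}^r,\ e_{i,j}\mapsto\nu_{i,j})\cong H_2(X,\mathbb{Z})$, so $H^2(X,\mathbb{R})\cong L_{\mathrm{ext}}^\vee\otimes\mathbb{R}$ contains the closed Kähler cone $\overline{\mathrm{K\ddot ah}(X)}$. For $\ell\in L_{\mathrm{ext}}$, $\ell^+$ is its positive part and $I_\ell(\alpha)=\prod_{(i,j)\in J}\prod_{k=0}^{\ell^+_{i,j}-1}(\alpha_{i,j}-k)$. The indicial ideal $\mathrm{Ind}(\tau,\beta)\subset\mathbb{C}[\alpha_{i,j}:(i,j)\in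 J]$ is generated by $I_\ell(\alpha)$ for $0\ne\ell\in\tau^\vee\cap L_{\mathrm{ext}}$ and by $\sum_{(i,j)\in J}\langle\bar m,\nu_{i,j}\rangle\alpha_{i,j}-\langle\bar m,\beta\rangle$ for $\bar m\in M\times\mathbb{Z}^r$. *)

From HB Require Import structures.
From mathcomp Require Import all_boot all_order all_algebra.
From mathcomp Require Import reals Rstruct complex.
From Stdlib Require Import Rdefinitions.

Set Implicit Arguments.
Unset Strict Implicit.
Unset Printing Implicit Defensive.

Import Order.TTheory GRing.Theory Num.Theory.
Local Open Scope ring_scope.

Notation RR := Rdefinitions.R.
Notation CC := (complex Rdefinitions.R).

(* Index set J = {(i,j) : 1<=i<=r, 0<=j<=n_i}, re-indexed as 'I_r + 'I_k:
   (i,0) <-> inl i,  (i,j) with j>=1 <-> inr rho where rho = rho_{i,j} is the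
   ray with p rho = i.  Here k = |Sigma(1)|, rays are indexed by 'I_k. *)
Definition Jidx (r k : nat) := ('I_r + 'I_k)%type.

Section Toric.
Variables (n k r : nat).
(* u rho = primitive generator of the ray rho, a vector in N = Z^n *)
Variable u : 'I_k -> 'I_n -> int.
(* the maximal cones of the (simplicial) fan, as sets of rays *)
Variable Sig : {set {set 'I_k}}.
(* the nef-partition: rho \in I_(p rho) *)
Variable p : 'I_k -> 'I_r.

Definition dotM (m : 'I_n -> RR) (rho : 'I_k) : RR :=
  \sum_(b < n) m b * (u rho b)%:~R.

Definition in_cone (S : {set 'I_k}) (v : 'I_n -> RR) : Prop :=
  exists c : 'I_k -> RR, (forall rho, 0 <= c rho) /\
    (forall b, v b = \sum_(rho in S) c rho * (u rho b)%:~R).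

Definition Zbasis (S : {set 'I_k}) : Prop :=
  (forall v : 'I_n -> int, exists c : 'I_k -> int,
      forall b, v b = \sum_(rho in S) c rho * u rho b) /\
  (forall c : 'I_k -> int, (forall b, \sum_(rho in S) c rho * u rho b = 0) ->
      forall rho, rho \in S -> c rho = 0).

Definition smooth_complete_fan : Prop :=
  [/\ injective u,
      (forall rho, exists2 s, s \in Sig & rho \in s),
      (forall s, s \in Sig -> Zbasis s),
      (forall s t v, s \in Sig -> t \in Sig -> in_cone s v -> in_cone t v ->
          in_cone (s :&: t) v) &
      (forall v : 'I_n -> RR, exists2 s, s \in Sig & in_cone s v)].

(* projectivity: existence of a (Cartier) divisor sum a_rho D_rho with
   strictly convex support function, i.e. an ample divisor *)
Definition projective_fan : Prop :=
  exists a : 'I_k -> int, forall s, s \in Sig -> exists m : 'I_n -> int,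
    (forall rho, rho \in s -> \sum_(b < n) m b * u rho b = - a rho) /\
    (forall rho, rho \notin s -> - a rho < \sum_(b < n) m b * u rho b).

Definition smooth_projective_fan : Prop :=
  smooth_complete_fan /\ projective_fan.

(* an R-divisor sum_rho a_rho D_rho on the complete toric variety X is nef
   iff its support function is convex:  for every maximal cone s there is
   m_s in M_R with <m_s,u_rho> = -a_rho for rho in s and
   <m_s,u_rho> >= -a_rho for all rho. *)
Definition nef_divisor (a : 'I_k -> RR) : Prop :=
  forall s, s \in Sig -> exists m : 'I_n -> RR,
    (forall rho, rho \in s -> dotM m rho = - a rho) /\
    (forall rho, - a rho <= dotM m rho).

(* nef-partition: each E_i = sum_{rho in I_i} D_rho is nef *)
Definition nef_partition : Prop :=
  forall i : 'I_r, nef_divisor (fun rho => (p rho == i)%:R).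

(* <m_bar, nu_J> for m_bar = (m, c) in M x Z^r *)
Definition pair_nu (m : 'I_n -> int) (c : 'I_r -> int) (j : Jidx r k) : int :=
  match j with
  | inl i => c i
  | inr rho => \sum_(b < n) m b * u rho b + c (p rho)
  end.

(* L_ext = ker (Z^J -> N x Z^r, e_J |-> nu_J) *)
Definition Lext (l : Jidx r k -> int) : Prop :=
  (forall b : 'I_n, \sum_(rho < k) l (inr rho) * u rho b = 0) /\
  (forall i : 'I_r, l (inl i) + \sum_(rho < k | p rho == i) l (inr rho) = 0).

(* An element x of R^J represents the element (l |-> sum_J x_J l_J) of
   L_ext^vee (x) R = H^2(X,R); under L_ext = H_2(X,Z) (l |-> (l_{inr rho})_rho)
   it is the class of the divisor sum_rho (x_{inr rho} - x_{inl (p rho)}) D_rho.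
   It lies in the closed Kaehler cone iff this class is nef. *)
Definition closed_kahler (x : Jidx r k -> RR) : Prop :=
  nef_divisor (fun rho => x (inr rho) - x (inl (p rho))).

End Toric.

(* tau is a (convex) cone in R^J (taken as the full preimage of a cone of
   L_ext^vee (x) R) *)
Definition is_cone (r k : nat) (tau : (Jidx r k -> RR) -> Prop) : Prop :=
  [/\ tau (fun _ => 0),
      (forall x y, tau x -> tau y -> tau (fun j => x j + y j)) &
      (forall (c : RR) x, 0 <= c -> tau x -> tau (fun j => c * x j))].

Definition in_dual (r k : nat) (tau : (Jidx r k -> RR) -> Prop)
  (l : Jidx r k -> int) : Prop :=
  forall x, tau x -> 0 <= \sum_(j : Jidx r k) x j * (l j)%:~R.

Definition posp (z : int) : nat := if z is Posz m then m else 0%N.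

Definition Iell (r k : nat) (l : Jidx r k -> int) (alpha : Jidx r k -> CC) : CC :=
  \prod_(j : Jidx r k) \prod_(q < posp (l j)) (alpha j - q%:R).

(* <m_bar, beta> with beta = (0,...,0,-1/2,...,-1/2) *)
Definition pair_beta (r : nat) (c : 'I_r -> int) : CC :=
  - ((\sum_(i < r) (c i)%:~R) / 2%:R).

Definition ind_zero (n k r : nat) (u : 'I_k -> 'I_n -> int) (p : 'I_k -> 'I_r)
  (tau : (Jidx r k -> RR) -> Prop) (alpha : Jidx r k -> CC) : Prop :=
  (forall l : Jidx r k -> int, Lext u p l -> (exists j, l j != 0) ->
      in_dual tau l -> Iell l alpha = 0) /\
  (forall (m : 'I_n -> int) (c : 'I_r -> int),
      \sum_(j : Jidx r k) (pair_nu u p m c j)%:~R * alpha j - pair_beta c = 0).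

Definition alpha0 (r k : nat) (j : Jidx r k) : CC :=
  match j with
  | inl _ => - (2%:R)^-1
  | inr _ => 0
  end.

(* Let alpha be a common zero of Ind(tau, beta).  Write alpha_rho for the
   coordinate alpha_{inr rho} attached to a ray rho, and P for the set of rays
   with alpha_rho <> 0.
   - P lies in a maximal cone s of the fan.  Otherwise, by completeness the
     integral vector sum_{rho in P} u_rho lies in some cone s, and by
     unimodularity it is a nonnegative integral combination of the rays of s;
     the difference of the two expressions is a ray relation l with l <= 1_P
     and l = 1_P off s.  Extended to an element L of L_ext, it pairs
     nonnegatively with every nef class (nef support functions are convex),
     so L lies in tau^vee and I_L(alpha) = 0; but the only way a factor of
     I_L(alpha) can vanish forces alpha_rho = 0 for some rho in P.
   - The linear generators with m_bar = (m, 0), m the dual basis of s, give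
     alpha_rho = 0 for rho in s, hence alpha vanishes on all rays.
   - The linear generators with m_bar = (0, e_i) then give alpha_{i,0} = -1/2.
   The file first develops ray relations of a unimodular complete fan, then
   their extension to L_ext, then the consequences of the linear generators,
   and finally assembles the theorem. *)

From HB Require Import structures.
From mathcomp Require Import all_boot all_order all_algebra.
From mathcomp Require Import reals Rstruct complex.
Set Implicit Arguments.
Unset Strict Implicit.
Unset Printing Implicit Defensive.
Import Order.TTheory GRing.Theory Num.Theory.
Local Open Scope ring_scope.

Section RayRelations.
Variables (n k : nat) (u : 'I_k -> 'I_n -> int).

Definition ray_relation (l : 'I_k -> int) : Prop :=
  forall b, \sum_(rho < k) l rho * u rho b = 0.

Lemma Zbasis_coords_unique (s : {set 'I_k}) (c c' : 'I_k -> int) :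
  Zbasis u s ->
  (forall b, \sum_(rho in s) c rho * u rho b = \sum_(rho in s) c' rho * u rho b) ->
  {in s, c =1 c'}.
Proof.
case=> _ hfree hcc' rho hrho; apply/eqP; rewrite -subr_eq0; apply/eqP.
apply: (hfree (fun rho => c rho - c' rho)) => // b.
by under eq_bigr => sg _ do rewrite mulrBl; rewrite sumrB hcc' subrr.
Qed.

Lemma Zbasis_dual (s : {set 'I_k}) : Zbasis u s ->
  exists m : 'I_k -> 'I_n -> int, forall sg rho, sg \in s -> rho \in s ->
    \sum_(b < n) m sg b * u rho b = (sg == rho)%:R.
Proof.
move=> hs; have [c hc] : exists c : 'I_n -> 'I_k -> int, forall b b',
    (b == b')%:R = \sum_(rho in s) c b rho * u rho b'.
  exact: fin_all_exists (fun b => hs.1 (fun b' => (b == b')%:R)).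
exists (fun sg b => c b sg) => sg rho hsg hrho.
have expand : forall b',
    \sum_(t in s) (\sum_(b < n) u rho b * c b t) * u t b' = u rho b'.
  move=> b'; under eq_bigr => t _ do rewrite mulr_suml.
  rewrite exchange_big /=.
  under eq_bigr => b _ do
    rewrite -(eq_bigr _ (fun t _ => mulrA _ _ _)) -mulr_sumr -hc.
  rewrite (bigD1 b') //= eqxx mulr1 big1 ?addr0 // => b /negbTE ->.
  by rewrite mulr0.
have delta : forall b', \sum_(t in s) (rho == t)%:R * u t b' = u rho b'.
  move=> b'; rewrite (bigD1 rho) //= eqxx mul1r big1 ?addr0 //.
  by move=> t /andP[_ hne]; rewrite eq_sym (negbTE hne) mul0r.
rewrite eq_sym; under eq_bigr => b _ do rewrite mulrC.
apply: (Zbasis_coords_unique (c := fun t => \sum_(b < n) u rho b * c b t)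
  (c' := fun t => (rho == t)%:R) hs) => // b'.
by rewrite expand delta.
Qed.

Lemma Zbasis_cone_coords (s : {set 'I_k}) (w : 'I_n -> int) :
  Zbasis u s -> in_cone u s (fun b => (w b)%:~R) ->
  exists e : 'I_k -> int, (forall rho, rho \in s -> 0 <= e rho) /\
    (forall b, w b = \sum_(rho in s) e rho * u rho b).
Proof.
move=> hs [c [hc0 hc]]; have [m hm] := Zbasis_dual hs.
pose e sg := \sum_(b < n) m sg b * w b.
have he : forall sg, sg \in s -> (e sg)%:~R = c sg :> RR.
  move=> sg hsg; rewrite /e rmorph_sum /=.
  under eq_bigr => b _ do rewrite rmorphM /= hc mulr_sumr.
  rewrite exchange_big /=.
  transitivity (\sum_(rho in s) c rho * (\sum_(b < n) m sg b * u rho b)%:~R).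
    apply: eq_bigr => rho _; rewrite rmorph_sum mulr_sumr.
    by apply: eq_bigr => b _; rewrite rmorphM /= mulrCA.
  rewrite (bigD1 sg) //= hm // eqxx rmorph1 mulr1 big1 ?addr0 //.
  by move=> t /andP[ht hne]; rewrite hm // eq_sym (negbTE hne) rmorph0 mulr0.
exists e; split => [sg hsg|b]; first by rewrite -(ler0z RR) he.
apply/eqP; rewrite -(eqr_int RR) hc rmorph_sum /=; apply/eqP.
by apply: eq_bigr => rho hrho; rewrite rmorphM /= he.
Qed.

Lemma dotM_relation (m : 'I_n -> RR) (l : 'I_k -> int) :
  ray_relation l -> \sum_(rho < k) dotM u m rho * (l rho)%:~R = 0.
Proof.
move=> hl; rewrite /dotM; under eq_bigr => rho _ do rewrite mulr_suml.
rewrite exchange_big /= big1 // => b _.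
under eq_bigr => rho _ do rewrite -mulrA -rmorphM /= [u _ _ * _]mulrC.
by rewrite -mulr_sumr -rmorph_sum /= hl mulr0.
Qed.

(* Convexity of the support function of a nef divisor d: d pairs
   nonnegatively with any ray relation that is nonnegative off a cone s. *)
Lemma nef_relation_ge0 (Sig : {set {set 'I_k}}) (s : {set 'I_k})
    (d : 'I_k -> RR) (l : 'I_k -> int) :
  s \in Sig -> nef_divisor u Sig d -> ray_relation l ->
  (forall rho, rho \notin s -> 0 <= l rho) ->
  0 <= \sum_(rho < k) d rho * (l rho)%:~R.
Proof.
move=> hs hd hl hpos; have [m [hm_s hm_ge]] := hd s hs.
have -> : \sum_(rho < k) d rho * (l rho)%:~R =
          \sum_(rho < k) (d rho + dotM u m rho) * (l rho)%:~R.
  under [RHS]eq_bigr => rho _ do rewrite mulrDl.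
  by rewrite big_split /= dotM_relation ?addr0.
apply: sumr_ge0 => rho _.
have [hrho|hrho] := boolP (rho \in s); first by rewrite hm_s // subrr mul0r.
by rewrite mulr_ge0 ?ler0z ?hpos // -lerBlDl sub0r.
Qed.

(* For any set P of rays there is a cone s and a ray relation l with l = 1_P
   off s and l <= 1_P everywhere: expand sum_{rho in P} u_rho in the cone
   that contains it. *)
Lemma relation_off_cone (Sig : {set {set 'I_k}}) (P : {set 'I_k}) :
  smooth_complete_fan u Sig ->
  exists s, exists l : 'I_k -> int, [/\ s \in Sig, ray_relation l,
    (forall rho, rho \notin s -> l rho = (rho \in P)%:R) &
    (forall rho, l rho <= (rho \in P)%:R)].
Proof.
case=> _ _ hZ _ hcomplete.
pose w b := \sum_(rho in P) u rho b.
have [s hs hw] := hcomplete (fun b => (w b)%:~R).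
have [e [he0 hwe]] := Zbasis_cone_coords (hZ s hs) hw.
pose l rho := (rho \in P)%:R - (if rho \in s then e rho else 0).
exists s, l; split => // [b|rho hrho|rho].
- rewrite /l; under eq_bigr => rho _ do rewrite mulrBl.
  rewrite sumrB; apply/eqP; rewrite subr_eq0; apply/eqP.
  transitivity (w b).
    rewrite /w [RHS]big_mkcond; apply: eq_bigr => rho _.
    by case: (rho \in P); rewrite ?mul1r ?mul0r.
  rewrite hwe big_mkcond; apply: eq_bigr => rho _.
  by case: (rho \in s); rewrite ?mul0r.
- by rewrite /l (negbTE hrho) subr0.
- rewrite /l lerBlDr lerDl; case: ifP => // hrho; exact: he0.
Qed.
End RayRelations.

Section ExtendedRelations.
Variables (n k r : nat) (u : 'I_k -> 'I_n -> int) (p : 'I_k -> 'I_r).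

Definition ext_relation (l : 'I_k -> int) (j : Jidx r k) : int :=
  match j with
  | inl i => - \sum_(rho < k | p rho == i) l rho
  | inr rho => l rho
  end.

Lemma ext_relation_Lext (l : 'I_k -> int) :
  ray_relation u l -> Lext u p (ext_relation l).
Proof. by move=> hl; split => // i /=; rewrite addNr. Qed.

Lemma pairing_ext_relation (x : Jidx r k -> RR) (l : 'I_k -> int) :
  \sum_(j : Jidx r k) x j * (ext_relation l j)%:~R =
  \sum_(rho < k) (x (inr rho) - x (inl (p rho))) * (l rho)%:~R.
Proof.
rewrite big_sumType /=.
under [RHS]eq_bigr => rho _ do rewrite mulrBl.
rewrite sumrB addrC; congr (_ + _).
under eq_bigr => i _ do rewrite rmorphN rmorph_sum mulrN mulr_sumr.
rewrite sumrN (partition_big p predT) //=; congr (- _).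
by apply: eq_bigr => i _; apply: eq_bigr => rho /eqP ->.
Qed.

Lemma ext_relation_dual (Sig : {set {set 'I_k}}) (s : {set 'I_k})
    (tau : (Jidx r k -> RR) -> Prop) (l : 'I_k -> int) :
  (forall x, tau x -> closed_kahler u Sig p x) -> s \in Sig ->
  ray_relation u l -> (forall rho, rho \notin s -> 0 <= l rho) ->
  in_dual tau (ext_relation l).
Proof.
move=> hK hs hl hpos x /hK hx.
by rewrite pairing_ext_relation; exact: nef_relation_ge0 hs hx hl hpos.
Qed.

(* The (i,0) entries of such an extended relation are nonpositive, because
   each E_i is nef. *)
Lemma ext_relation_part_le0 (Sig : {set {set 'I_k}}) (s : {set 'I_k})
    (l : 'I_k -> int) (i : 'I_r) :
  nef_partition u Sig p -> s \in Sig ->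
  ray_relation u l -> (forall rho, rho \notin s -> 0 <= l rho) ->
  ext_relation l (inl i) <= 0.
Proof.
move=> hp hs hl hpos; rewrite /= oppr_le0 -(ler0z RR) rmorph_sum /= big_mkcond.
have -> : \sum_(rho < k) (if p rho == i then (l rho)%:~R else 0) =
          \sum_(rho < k) (p rho == i)%:R * (l rho)%:~R :> RR.
  by apply: eq_bigr => rho _; case: (p rho == i); rewrite ?mul1r ?mul0r.
exact: nef_relation_ge0 hs (hp i) hl hpos.
Qed.
End ExtendedRelations.

Lemma Iell_eq0 (r k : nat) (l : Jidx r k -> int) (alpha : Jidx r k -> CC) :
  Iell l alpha = 0 -> exists j, exists2 q : nat, q%:Z < l j & alpha j = q%:R.
Proof.
move/eqP/prodf_eq0 => [j _ /prodf_eq0 [[q hq] _]].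
rewrite subr_eq0 => /eqP hj; exists j, q => //.
by move: (hq); case: (l j) => [m|m] //=; rewrite ltz_nat.
Qed.

Section LinearGenerators.
Variables (n k r : nat) (u : 'I_k -> 'I_n -> int) (p : 'I_k -> 'I_r).
Variable alpha : Jidx r k -> CC.
Hypothesis hlin : forall (m : 'I_n -> int) (c : 'I_r -> int),
  \sum_(j : Jidx r k) (pair_nu u p m c j)%:~R * alpha j - pair_beta c = 0.

Lemma ind_linear_rays (m : 'I_n -> int) :
  \sum_(rho < k) (\sum_(b < n) m b * u rho b)%:~R * alpha (inr rho) = 0.
Proof.
have beta0 : pair_beta (fun _ : 'I_r => 0) = 0.
  by rewrite /pair_beta big1 ?mul0r ?oppr0.
have := hlin m (fun _ => 0).
rewrite beta0 subr0 big_sumType /= [X in X + _]big1 ?add0r.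
  by under eq_bigr => rho _ do rewrite addr0.
by move=> i _; rewrite mul0r.
Qed.

Lemma ind_linear_part (i : 'I_r) :
  alpha (inl i) + \sum_(rho < k | p rho == i) alpha (inr rho) = - 2%:R^-1.
Proof.
pose c i' : int := (i' == i)%:R.
have beta_c : pair_beta c = - 2%:R^-1.
  rewrite /pair_beta (bigD1 i) //= /c eqxx big1 ?addr0 ?mul1r //.
  by move=> i' /negbTE ->.
have := hlin (fun _ => 0) c; rewrite beta_c /c.
rewrite big_sumType /= (bigD1 i) //= eqxx mul1r big1 ?addr0; last first.
  by move=> i' /negbTE ->; rewrite mul0r.
have -> : \sum_(rho < k)
    (\sum_(b < n) 0 * u rho b + (p rho == i)%:R)%:~R * alpha (inr rho) =
    \sum_(rho < k | p rho == i) alpha (inr rho).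
  rewrite [RHS]big_mkcond; apply: eq_bigr => rho _.
  rewrite big1 ?add0r => [|b _]; last exact: mul0r.
  by case: (p rho == i); rewrite ?mul1r ?mul0r.
by rewrite opprK => /eqP; rewrite addr_eq0 => /eqP.
Qed.

(* If the rays with alpha_rho <> 0 all lie in a unimodular cone s, then
   pairing with the dual basis of s shows that there are none. *)
Lemma rays_vanish_in_cone (s : {set 'I_k}) :
  Zbasis u s -> (forall rho, alpha (inr rho) != 0 -> rho \in s) ->
  forall rho, alpha (inr rho) = 0.
Proof.
move=> hs hsupp rho; have [//|hnz] := eqVneq (alpha (inr rho)) 0.
have [m hm] := Zbasis_dual hs.
have := ind_linear_rays (m rho).
rewrite (bigD1 rho) //= hm ?hsupp // eqxx mul1r big1 ?addr0 => [/eqP|sg hne].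
  by rewrite (negbTE hnz).
have [->|/hsupp hsg] := eqVneq (alpha (inr sg)) 0; first by rewrite mulr0.
by rewrite (hm rho sg (hsupp _ hnz) hsg) eq_sym (negbTE hne) mul0r.
Qed.
End LinearGenerators.

Lemma ray_support_in_cone (n k r : nat) (u : 'I_k -> 'I_n -> int)
    (Sig : {set {set 'I_k}}) (p : 'I_k -> 'I_r)
    (tau : (Jidx r k -> RR) -> Prop) (alpha : Jidx r k -> CC) :
  smooth_complete_fan u Sig -> nef_partition u Sig p ->
  (forall x, tau x -> closed_kahler u Sig p x) ->
  (forall l : Jidx r k -> int, Lext u p l -> (exists j, l j != 0) ->
      in_dual tau l -> Iell l alpha = 0) ->
  exists2 s, s \in Sig & forall rho, alpha (inr rho) != 0 -> rho \in s.
Proof.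
move=> hX hp hK hI; pose P := [set rho | alpha (inr rho) != 0].
have [s [l [hs hl hoff hle]]] := relation_off_cone P hX.
have hpos : forall rho, rho \notin s -> 0 <= l rho.
  by move=> rho /hoff ->; case: (rho \in P).
exists s => // rho0 hnz0; apply/negPn/negP => hout.
have hnonzero : exists j, ext_relation p l j != 0.
  by exists (inr rho0); rewrite /= hoff // inE hnz0.
have hvanish := hI _ (ext_relation_Lext p hl) hnonzero (ext_relation_dual hK hs hl hpos).
have [[i|rho] [q hq hj]] := Iell_eq0 hvanish.
  have := lt_le_trans hq (ext_relation_part_le0 i hp hs hl hpos).
  by rewrite ltNge.
have := lt_le_trans hq (hle rho); have [hrho|] := boolP (rho \in P); last by [].
rewrite ltz_nat ltnS leqn0 => /eqP q0.
by move: hrho; rewrite inE hj q0 eqxx.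
Qed.

Theorem mainTheorem9 (n k r : nat) (u : 'I_k -> 'I_n -> int)
  (Sig : {set {set 'I_k}}) (p : 'I_k -> 'I_r)
  (hX : smooth_projective_fan u Sig) (hp : nef_partition u Sig p)
  (tau : (Jidx r k -> RR) -> Prop) (htau : is_cone tau)
  (hK : forall x, tau x -> closed_kahler u Sig p x)
  (alpha : Jidx r k -> CC) :
  ind_zero u p tau alpha -> forall j : Jidx r k, alpha j = alpha0 j.
Proof.
move=> [hI hlin]; have [hfan _] := hX.
have [s hs hsupp] := ray_support_in_cone hfan hp hK hI.
have [_ _ hZ _ _] := hfan.
have hrays := rays_vanish_in_cone hlin (hZ s hs) hsupp.
case=> [i|rho] /=; last exact: hrays.
have := ind_linear_part hlin i.
by rewrite big1 ?addr0 // => rho _; exact: hrays.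
Qed.
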